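(* Let $(\Omega(\mathcal{A}),\mathrm{d},\bar{\mathrm{d}})$ be a bidifferential graded algebra, and let $M,N,m\ge1$. Let $X$ ($N\times N$, invertible), $Y$ ($M\times N$), $P$, $R$ ($N\times N$) and $Q$ ($N\times M$) be matrices over $\mathcal{A}$ with $\mathrm{d}R=0$, $\mathrm{d}Q=0$, $\bar{\mathrm{d}}X=(\mathrm{d}X)P$, $\bar{\mathrm{d}}Y=(\mathrm{d}Y)P$ and $RX+QY=XP$, and put $\Phi=YX^{-1}$. Let $\Delta$ be an $m\times m$ matrix over $\mathcal{A}$ with $\bar{\mathrm{d}}\Delta=(\mathrm{d}\Delta)\Delta$, let $\mathcal{C}$ be an $m\times N$ matrix over $\mathcal{A}$ with $\mathrm{d}\mathcal{C}=0$, and let $G$ be an $m\times N$ matrix over $\mathcal{A}$ such that $$\bar{\mathrm{d}}(GX)=\mathrm{d}(GX)\,P,\qquad (GX)P-\Delta(GX)=\mathcal{C}X .$$ Then $\bar{\mathrm{d}}G+G\,Q\,\mathrm{d}\Phi=\mathrm{d}(\Delta G)$. Moreover, suppose $Q=VU^T$ with $U$ an $M\times m$ and $V$ an $N\times m$ matrix over $\mathcal{A}$ satisfying $\mathrm{d}U=\bar{\mathrm{d}}U=\mathrm{d}V=\bar{\mathrm{d}}V=0$, and suppose $GV$ is invertible. Then $g:=(GV)^{-1}$ satisfies $$\bar{\mathrm{d}}g^{-1}+g^{-1}\,\mathrm{d}\phi'=\mathrm{d}(\Delta g^{-1})\quad\text{with }\phi'=U^T\Phi V,$$ and consequently $\m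athrm{d}\big([\bar{\mathrm{d}}g-(\mathrm{d}g)\Delta]\,g^{-1}\big)=0$.
   Context: $\mathcal{A}$ is a unital associative algebra over $\mathbb{C}$ with identity $I$. A bidifferential graded algebra $(\Omega(\mathcal{A}),\mathrm{d},\bar{\mathrm{d}})$ consists of a graded associative algebra $\Omega(\mathcal{A})=\bigoplus_{r\ge 0}\Omega^r(\mathcal{A})$ with $\Omega^0(\mathcal{A})=\mathcal{A}$ (each $\Omega^r(\mathcal{A})$ an $\mathcal{A}$-bimodule) together with two linear maps $\mathrm{d},\bar{\mathrm{d}}:\Omega^r(\mathcal{A})\to\Omega^{r+1}(\mathcal{A})$ satisfying the graded Leibniz rule $\mathrm{d}(\alpha\beta)=(\mathrm{d}\alpha)\beta+(-1)^r\alpha\,\mathrm{d}\beta$ for $\alpha\in\Omega^r(\mathcal{A})$ (and likewise for $\bar{\mathrm{d}}$), and $\mathrm{d}^2=\bar{\mathrm{d}}^2=0$, $\mathrm{d}\bar{\mathrm{d}}+\bar{\mathrm{d}}\mathrm{d}=0$. The maps $\mathrm{d},\bar{\mathrm{d}}$ are applied entrywise to matrices with entries in $\Omega(\mathcal{A})$, and products of such matrices use the matrix product together with the product of $\Omega(\mathcal{A})$. $U^T$ denotes the transpose. *)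

From HB Require Import structures.
From mathcomp Require Import all_boot all_order all_algebra.
Set Implicit Arguments. Unset Strict Implicit. Unset Printing Implicit Defensive.
Import GRing.Theory.
Local Open Scope ring_scope.

(* A graded associative K-algebra  Omega = (+)_{r>=0} Og r  realised internally:
   Omega is a (unital, associative, not nec. commutative) K-algebra and
   Og r is the homogeneous component of degree r.  Og 0 is the algebra A. *)
Definition graded_algebra (K : fieldType) (Omega : algType K)
    (Og : nat -> {pred Omega}) : Prop :=
  (forall r, 0 \in Og r) /\
  (forall r x y, x \in Og r -> y \in Og r -> x + y \in Og r) /\
  (forall r (a : K) x, x \in Og r -> a *: x \in Og r) /\
  1 \in Og 0%N /\
      (forall r s x y, x \in Og r -> y \in Og s -> x * y \in Og (r + s)%N) /\
      (forall x, exists n (xs : 'I_n -> Omega),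
          (forall i, xs i \in Og i) /\ x = \sum_(i < n) xs i) /\
      (forall n (xs : 'I_n -> Omega),
          (forall i, xs i \in Og i) -> \sum_(i < n) xs i = 0 ->
          forall i, xs i = 0).

Definition graded_derivation (K : fieldType) (Omega : algType K)
    (Og : nat -> {pred Omega}) (d : {linear Omega -> Omega}) : Prop :=
  (forall r x, x \in Og r -> d x \in Og r.+1) /\
  (forall r x y, x \in Og r -> d (x * y) = d x * y + (-1) ^+ r * x * d y).

Definition bidiff_graded_algebra (K : fieldType) (Omega : algType K)
    (Og : nat -> {pred Omega}) (d dbar : {linear Omega -> Omega}) : Prop :=
  graded_algebra Og /\ graded_derivation Og d /\ graded_derivation Og dbar /\
  (forall x, d (d x) = 0) /\ (forall x, dbar (dbar x) = 0) /\
  (forall x, d (dbar x) + dbar (d x) = 0).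

Definition mx_over (K : fieldType) (Omega : algType K)
    (Og : nat -> {pred Omega}) p q (Mx : 'M[Omega]_(p, q)) : Prop :=
  forall i j, Mx i j \in Og 0%N.

From HB Require Import structures.
From mathcomp Require Import all_boot all_order all_algebra.
Import GRing.Theory.
Set Implicit Arguments. Unset Strict Implicit.
Local Open Scope ring_scope.

(* Conjugating the relation  R X + Q Y = X P  by X gives
   X P X^-1 = R + Q Phi.  Expanding  dbar (G X) = d(G X) P  with the matrix
   Leibniz rule and  dbar X = (d X) P  yields  dbar G = (d G)(R + Q Phi),
   while the Sylvester relation for G X becomes  G (R + Q Phi) - Delta G = C.
   Applying d to the latter (d R = d Q = d C = 0) and substituting the former
   gives the first claim.  Multiplying it on the right by V and using
   Q = V U^T with d-, dbar-closed U, V gives the same equation for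
   F = G V and phi' = U^T Phi V.  Finally, for any invertible F satisfying
   dbar F + F d phi' = d(Delta F), the inverse g = F^-1 satisfies
   (dbar g - (d g) Delta) F = d phi' - d(g Delta F), which is d-exact, hence
   d-closed. *)

Section MatrixCalculus.
Variables (K : fieldType) (Omega : algType K) (Og : nat -> {pred Omega}).
Hypothesis Og0 : forall r, 0 \in Og r.
Hypothesis OgD : forall r x y, x \in Og r -> y \in Og r -> x + y \in Og r.
Hypothesis Og1 : 1 \in Og 0%N.
Hypothesis OgM :
  forall r s x y, x \in Og r -> y \in Og s -> x * y \in Og (r + s)%N.

Lemma mx_over_mul p q r (A : 'M[Omega]_(p, q)) (B : 'M[Omega]_(q, r)) :
  mx_over Og A -> mx_over Og B -> mx_over Og (A *m B).
Proof.
move=> oA oB i j; rewrite mxE.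
apply: (big_ind (fun x => x \in Og 0%N)) => //; first exact: OgD.
by move=> k _; apply: (@OgM 0 0).
Qed.

Lemma mx_over_tr p q (A : 'M[Omega]_(p, q)) : mx_over Og A -> mx_over Og A^T.
Proof. by move=> oA i j; rewrite mxE. Qed.

Variable D : {linear Omega -> Omega}.
Hypothesis derD : graded_derivation Og D.

(* Leibniz rule for matrices whose left factor has entries of degree 0,
   where the sign (-1)^r is trivial. *)
Lemma map_mxM p q r (A : 'M[Omega]_(p, q)) (B : 'M[Omega]_(q, r)) :
  mx_over Og A -> map_mx D (A *m B) = map_mx D A *m B + A *m map_mx D B.
Proof.
case: derD => _ leibniz oA; apply/matrixP => i j.
rewrite !mxE raddf_sum -big_split; apply: eq_bigr => k _.
by rewrite !mxE; have := leibniz 0%N _ (B k j) (oA i k); rewrite expr0 mul1r.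
Qed.

Lemma derivation1 : D 1 = 0.
Proof.
case: derD => _ leibniz; have := leibniz 0%N 1 1 Og1.
rewrite expr0 !mul1r mulr1 => e.
by apply: (@addrI _ (D 1)); rewrite addr0 -e.
Qed.

Lemma map_mx1 n : map_mx D (1%:M : 'M[Omega]_n) = 0.
Proof.
apply/matrixP => i j; rewrite !mxE.
by case: (i == j); rewrite ?derivation1 // raddf0.
Qed.

End MatrixCalculus.

Lemma map_mx_nilpotent (K : fieldType) (Omega : algType K)
    (D : {linear Omega -> Omega}) (DD : forall x, D (D x) = 0)
    p q (A : 'M[Omega]_(p, q)) :
  map_mx D (map_mx D A) = 0.
Proof. by apply/matrixP => i j; rewrite !mxE DD. Qed.

Section LaxEquations.
Variables (K : fieldType) (Omega : algType K) (Og : nat -> {pred Omega}).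
Variables (d dbar : {linear Omega -> Omega}).
Hypothesis Og0 : forall r, 0 \in Og r.
Hypothesis OgD : forall r x y, x \in Og r -> y \in Og r -> x + y \in Og r.
Hypothesis Og1 : 1 \in Og 0%N.
Hypothesis OgM :
  forall r s x y, x \in Og r -> y \in Og s -> x * y \in Og (r + s)%N.
Hypothesis der_d : graded_derivation Og d.
Hypothesis der_dbar : graded_derivation Og dbar.
Hypothesis dd : forall x, d (d x) = 0.

Lemma linear_system_G M N m (X Xi : 'M[Omega]_N) (Y : 'M[Omega]_(M, N))
    (P R : 'M[Omega]_N) (Q : 'M[Omega]_(N, M))
    (Delta : 'M[Omega]_m) (C G : 'M[Omega]_(m, N)) :
  mx_over Og Q -> mx_over Og G -> X *m Xi = 1%:M ->
  map_mx d R = 0 -> map_mx d Q = 0 -> map_mx d C = 0 ->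
  map_mx dbar X = map_mx d X *m P ->
  R *m X + Q *m Y = X *m P ->
  map_mx dbar (G *m X) = map_mx d (G *m X) *m P ->
  (G *m X) *m P - Delta *m (G *m X) = C *m X ->
  map_mx dbar G + G *m Q *m map_mx d (Y *m Xi) = map_mx d (Delta *m G).
Proof.
move=> oQ oG XXi dR dQ dC dbX RQ dbGX sylv.
have conjP : X *m P *m Xi = R + Q *m (Y *m Xi).
  by rewrite -RQ mulmxDl -!mulmxA XXi mulmx1.
have dbGX' : map_mx dbar G *m X = map_mx d G *m X *m P.
  move: dbGX; rewrite (map_mxM der_dbar _ oG) (map_mxM der_d _ oG) dbX.
  by rewrite mulmxDl [G *m (_ *m P)]mulmxA => /addIr.
have dbG : map_mx dbar G = map_mx d G *m (R + Q *m (Y *m Xi)).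
  by rewrite -conjP !mulmxA -dbGX' -mulmxA XXi mulmx1.
have sylvG : G *m (R + Q *m (Y *m Xi)) - Delta *m G = C.
  have := congr1 (mulmx^~ Xi) sylv; rewrite /= mulmxBl -!mulmxA XXi !mulmx1.
  by rewrite -conjP -!mulmxA.
have := congr1 (map_mx d) sylvG.
rewrite map_mxB dC (map_mxM der_d _ oG) map_mxD dR add0r (map_mxM der_d _ oQ).
rewrite dQ mul0mx add0r -dbG -mulmxA => /eqP.
by rewrite subr_eq0 => /eqP.
Qed.

Lemma linear_system_reduced M N m (Phi : 'M[Omega]_(M, N))
    (Q : 'M[Omega]_(N, M)) (Delta : 'M[Omega]_m) (G : 'M[Omega]_(m, N))
    (U : 'M[Omega]_(M, m)) (V : 'M[Omega]_(N, m)) :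
  mx_over Og Phi -> mx_over Og Delta -> mx_over Og G -> mx_over Og U ->
  Q = V *m U^T -> map_mx d U = 0 -> map_mx d V = 0 -> map_mx dbar V = 0 ->
  map_mx dbar G + G *m Q *m map_mx d Phi = map_mx d (Delta *m G) ->
  map_mx dbar (G *m V) + (G *m V) *m map_mx d (U^T *m Phi *m V)
    = map_mx d (Delta *m (G *m V)).
Proof.
move=> oPhi oD oG oU -> dU dV dbV sysG.
have oUt := mx_over_tr oU.
rewrite (map_mxM der_dbar _ oG) dbV mulmx0 addr0.
rewrite (map_mxM der_d _ (mx_over_mul Og0 OgD OgM oUt oPhi)) dV mulmx0 addr0.
rewrite (map_mxM der_d _ oUt) -map_trmx dU trmx0 mul0mx add0r.
rewrite [Delta *m (G *m V)]mulmxA.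
rewrite (map_mxM der_d _ (mx_over_mul Og0 OgD OgM oD oG)) dV mulmx0 addr0.
by rewrite -sysG mulmxDl -!mulmxA.
Qed.

(* Gauge closedness: if F solves  dbar F + F d phi = d(Delta F)  and g is
   a left inverse of F, then (dbar g - (d g) Delta) F = d phi - d(g Delta F) is
   d-exact, hence d-closed. *)
Lemma inverse_gauge_closed m (F g Delta phi : 'M[Omega]_m) :
  mx_over Og g -> g *m F = 1%:M ->
  map_mx dbar F + F *m map_mx d phi = map_mx d (Delta *m F) ->
  map_mx d ((map_mx dbar g - map_mx d g *m Delta) *m F) = 0.
Proof.
move=> og gF sysF.
have dbgF : map_mx dbar g *m F = - (g *m map_mx dbar F).
  apply/eqP; rewrite -addr_eq0 -(map_mxM der_dbar _ og) gF.
  by rewrite (map_mx1 Og1 der_dbar).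
have dbF : map_mx dbar F = map_mx d (Delta *m F) - F *m map_mx d phi.
  by rewrite -sysF addrK.
have exact_form : (map_mx dbar g - map_mx d g *m Delta) *m F
    = map_mx d phi - map_mx d (g *m (Delta *m F)).
  rewrite (map_mxM der_d _ og) mulmxBl dbgF dbF mulmxBr.
  rewrite [g *m (F *m _)]mulmxA gF mul1mx -mulmxA.
  by rewrite opprB opprD addrA addrAC.
by rewrite exact_form map_mxB !(map_mx_nilpotent dd) subrr.
Qed.

End LaxEquations.

Theorem mainTheorem7 (K : fieldType) (Omega : algType K)
    (Og : nat -> {pred Omega}) (d dbar : {linear Omega -> Omega})
    (M N m : nat)
    (X : 'M[Omega]_N) (Xi : 'M[Omega]_N) (Y : 'M[Omega]_(M, N))
    (P R : 'M[Omega]_N) (Q : 'M[Omega]_(N, M))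
    (Delta : 'M[Omega]_m) (C : 'M[Omega]_(m, N)) (G : 'M[Omega]_(m, N)) :
  bidiff_graded_algebra Og d dbar ->
  (0 < M)%N -> (0 < N)%N -> (0 < m)%N ->
  mx_over Og X -> mx_over Og Xi -> mx_over Og Y -> mx_over Og P ->
  mx_over Og R -> mx_over Og Q -> mx_over Og Delta -> mx_over Og C ->
  mx_over Og G ->
  (* Xi is the inverse of X *)
  X *m Xi = 1%:M -> Xi *m X = 1%:M ->
  map_mx d R = 0 -> map_mx d Q = 0 ->
  map_mx dbar X = map_mx d X *m P ->
  map_mx dbar Y = map_mx d Y *m P ->
  R *m X + Q *m Y = X *m P ->
  map_mx dbar Delta = map_mx d Delta *m Delta ->
  map_mx d C = 0 ->
  map_mx dbar (G *m X) = map_mx d (G *m X) *m P ->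
  (G *m X) *m P - Delta *m (G *m X) = C *m X ->
  let Phi := Y *m Xi in
  map_mx dbar G + G *m Q *m map_mx d Phi = map_mx d (Delta *m G) /\
  (forall (U : 'M[Omega]_(M, m)) (V : 'M[Omega]_(N, m)) (g : 'M[Omega]_m),
     mx_over Og U -> mx_over Og V -> mx_over Og g ->
     Q = V *m U^T ->
     map_mx d U = 0 -> map_mx dbar U = 0 ->
     map_mx d V = 0 -> map_mx dbar V = 0 ->
     (* g is the inverse of G V, i.e. g^{-1} = G V *)
     g *m (G *m V) = 1%:M -> (G *m V) *m g = 1%:M ->
     let phi' := U^T *m Phi *m V in
     map_mx dbar (G *m V) + (G *m V) *m map_mx d phi'
       = map_mx d (Delta *m (G *m V)) /\
     map_mx d ((map_mx dbar g - map_mx d g *m Delta) *m (G *m V)) = 0).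
Proof.
move=> [[Og0 [OgD [_ [Og1 [OgM _]]]]] [der_d [der_dbar [dd _]]]] _ _ _.
move=> _ oXi oY _ _ oQ oD _ oG XXi _ dR dQ dbX _ RQ _ dC dbGX sylv Phi.
have sysG : map_mx dbar G + G *m Q *m map_mx d Phi = map_mx d (Delta *m G).
  exact: (linear_system_G der_d der_dbar oQ oG XXi dR dQ dC dbX RQ dbGX sylv).
split=> // U V g oU _ og QVU dU _ dV dbV gF _ phi'.
have oPhi : mx_over Og Phi := mx_over_mul Og0 OgD OgM oY oXi.
have sysF := linear_system_reduced Og0 OgD OgM der_d der_dbar
  oPhi oD oG oU QVU dU dV dbV sysG.
split=> //; exact: (inverse_gauge_closed Og1 der_d der_dbar dd og gF sysF).
Qed.
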